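(* Let $f$ be a function as described in the context and $\rho>0$. For $z,\beta\in[0,1]$ let $h(z,\beta)\coloneqq\beta f\left(\frac{z}{\beta}\right)+(1-\beta)f\left(\frac{1-z}{1-\beta}\right)$, and for $d\in\mathbb{N}_+$ and $\beta_1,\dots,\beta_d\in[0,1]$ define $$g_{f,\rho}(\beta_1,\dots,\beta_d)\coloneqq\inf\left\{z\in[0,1]:\inf_{\lambda_1,\dots,\lambda_d\ge0,\ \sum_i\lambda_i=1}h\left(z,\sum_{i=1}^d\lambda_i\beta_i\right)\le\rho\right\}$$ (for $d=1$ this is $g_{f,\rho}(\beta)=\inf\{z\in[0,1]:h(z,\beta)\le\rho\}$). Then for any $d\in\mathbb{N}_+$ and $\beta_1,\dots,\beta_d\in[0,1]$, $$g_{f,\rho}(\beta_1,\dots,\beta_d)=g_{f,\rho}\left(\min_{1\le i\le d}\beta_i\right).$$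
   Context: $f:\mathbb{R}\to\mathbb{R}\cup\{+\infty\}$ is a closed convex function with $f(1)=0$ and $f(t)=+\infty$ for $t<0$. *)

From HB Require Import structures.
From mathcomp Require Import all_boot all_order all_algebra.
From mathcomp Require Import all_classical all_reals all_analysis.
Set Implicit Arguments. Unset Strict Implicit. Unset Printing Implicit Defensive.
Import Order.TTheory GRing.Theory Num.Theory.
Import numFieldNormedType.Exports.
Local Open Scope classical_set_scope.
Local Open Scope ring_scope.

Definition proper_ext {R : realType} (f : R -> \bar R) : Prop :=
  forall x, f x != -oo%E.

Definition ext_convex {R : realType} (f : R -> \bar R) : Prop :=
  forall (x y t : R), (0 <= t <= 1)%R ->
    (f (t * x + (1 - t) * y)%R <= t%:E * f x + (1 - t)%R%:E * f y)%E.

Definition epi_closed {R : realType} (f : R -> \bar R) : Prop :=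
  closed [set p : R * R | (f p.1 <= p.2%:E)%E].

Definition fdiv_gen {R : realType} (f : R -> \bar R) : Prop :=
  [/\ proper_ext f, ext_convex f, epi_closed f, f 1 = 0%E &
      forall t, t < 0 -> f t = +oo%E].

Definition fslope_inf {R : realType} (f : R -> \bar R) : \bar R :=
  lim ((fun t : R => (f t * (t^-1)%:E)%E) @ +oo).

(* perspective b * f(a/b), with the usual conventions at b = 0:
   0 f(0/0) = 0 and 0 f(a/0) = a * f'(oo) for a > 0 *)
Definition persp {R : realType} (f : R -> \bar R) (a b : R) : \bar R :=
  if 0 < b then (b%:E * f (a / b)%R)%E
  else if a == 0 then 0%E else (a%:E * fslope_inf f)%E.

Definition hfun {R : realType} (f : R -> \bar R) (z b : R) : \bar R :=
  (persp f z b + persp f (1 - z)%R (1 - b)%R)%E.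

Definition g1 {R : realType} (f : R -> \bar R) (rho : R) (b : R) : \bar R :=
  ereal_inf [set z%:E | z in [set z : R | 0 <= z <= 1 /\ (hfun f z b <= rho%:E)%E]].

Definition gd {R : realType} (f : R -> \bar R) (rho : R) (d : nat)
  (beta : 'I_d -> R) : \bar R :=
  ereal_inf [set z%:E | z in [set z : R | 0 <= z <= 1 /\
    (ereal_inf [set hfun f z (\sum_(i < d) lam i * beta i)%R |
        lam in [set lam : 'I_d -> R | (forall i, (0 <= lam i)%R) /\
                                       (\sum_(i < d) lam i = 1)%R]]
       <= rho%:E)%E]].

(* h(z, .) is the f-divergence between the Bernoulli laws of parameters z and
   (.); it vanishes at z and is nonnegative by Jensen's inequality.  The
   perspective (a, b) |-> b f(a/b) is convex and vanishes on the diagonal, so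
   along the segment from (a, a) to (a, b) it is at most (1 - t) times its value
   at (a, b).  Applied to both terms of h with m = t z + (1 - t) b this gives
   h(z, m) <= (1 - t) h(z, b) <= h(z, b): h(z, .) is nondecreasing on [z, 1].
   At b = 1 the perspective is (1 - z) f'(oo), and f'(oo) dominates every chord
   slope (f(u) - f(1)) / (u - 1).
   Every convex combination of the beta_i lies in [min beta_i, 1] and min beta_i
   is one of them, so for z < min beta_i the inner infimum defining
   g(beta_1, ..., beta_d) is h(z, min beta_i); z = min beta_i is feasible on
   both sides since h(z, z) = 0 < rho. *)

From HB Require Import structures.
From mathcomp Require Import all_boot all_order all_algebra.
From mathcomp Require Import all_classical all_reals all_analysis.
From mathcomp Require Import ring lra.
Set Implicit Arguments. Unset Strict Implicit. Unset Printing Implicit Defensive.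
Import Order.TTheory GRing.Theory Num.Theory.
Import numFieldNormedType.Exports.
Local Open Scope classical_set_scope.
Local Open Scope ring_scope.

Lemma ge0_EFinM_neqNy (R : realType) (r : R) (x : \bar R) :
  0 <= r -> x != -oo%E -> (r%:E * x)%E != -oo%E.
Proof.
move=> r0; case: x => [x| |] //= _.
have [->|rn0] := eqVneq r 0; first by rewrite mul0e.
by rewrite gt0_muley // lte_fin lt_neqAle eq_sym rn0.
Qed.

Lemma cvge_sub1_div (R : realType) :
  ((t - 1) / t)%:E @[t --> +oo] --> (1%:E : \bar R).
Proof.
apply/fine_cvgP; split; first by near=> t.
have inv0 : (fun t : R => t^-1) @ +oo --> (0 : R).
  by apply/(@gtr0_cvgV0 _ _ _ _ id); [near=> t | exact: cvg_id].
have cvg1 : (fun t : R => 1 - t^-1) @ +oo --> (1 : R).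
  by rewrite -[X in _ --> X]subr0; apply: cvgB => //; exact: cvg_cst.
apply: cvg_trans cvg1.
apply: near_eq_cvg; near=> t; rewrite /= mulrBl divff ?mul1r // gt_eqF //.
Unshelve. all: by end_near.
Qed.

Lemma neqNy_adde_def (R : realDomainType) (x y : \bar R) :
  x != -oo%E -> y != -oo%E -> (x +? y)%E.
Proof. by move=> x_neqNy y_neqNy; apply: ltninfty_adde_def; rewrite inE ltNye. Qed.

Section Perspective.
Variables (R : realType) (f : R -> \bar R).
Hypotheses (f_neqNy : proper_ext f) (f_convex : ext_convex f) (f1 : f 1 = 0%E).

Lemma persp_gt0 a b : 0 < b -> persp f a b = (b%:E * f (a / b))%E.
Proof. by rewrite /persp => ->. Qed.

Lemma persp_b0 a : 0 <= a -> persp f a 0 = (a%:E * fslope_inf f)%E.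
Proof.
rewrite /persp ltxx le_eqVlt => /predU1P[<-|a0]; first by rewrite eqxx mul0e.
by rewrite gt_eqF.
Qed.

Lemma persp_diag a : 0 <= a -> persp f a a = 0%E.
Proof.
rewrite le_eqVlt => /predU1P[<-|a0]; first by rewrite /persp ltxx eqxx.
by rewrite persp_gt0 // divff ?gt_eqF // f1 mule0.
Qed.

Lemma hfun_diag z : 0 <= z <= 1 -> hfun f z z = 0%E.
Proof. by case/andP=> z0 z1; rewrite /hfun !persp_diag ?subr_ge0 ?adde0. Qed.

Lemma convex_from_one x t : 0 <= t <= 1 ->
  (f (t * 1 + (1 - t) * x) <= (1 - t)%:E * f x)%E.
Proof. by move=> t01; have := @f_convex 1 x t t01; rewrite f1 mule0 add0e. Qed.

Lemma chord_slope1_le s t : 1 < s -> s <= t ->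
  (f s * ((s - 1)^-1)%:E <= f t * ((t - 1)^-1)%:E)%E.
Proof.
move=> s1 st; have t1 : 1 < t by apply: lt_le_trans st.
set a := (t - s) / (t - 1).
have a01 : 0 <= a <= 1.
  rewrite divr_ge0 ?subr_ge0 ?(ltW t1) //= ler_pdivrMr ?subr_gt0 // mul1r.
  by rewrite lerD2l lerN2 ltW.
have fs_le : (f s <= (1 - a)%:E * f t)%E.
  have := @convex_from_one t a a01; rewrite (_ : a * 1 + (1 - a) * t = s) //.
  by rewrite /a; field; rewrite subr_eq0 gt_eqF.
rewrite (_ : (t - 1)^-1 = (1 - a) * (s - 1)^-1); last first.
  by rewrite /a; field; rewrite !subr_eq0 !gt_eqF.
rewrite EFinM muleA (muleC (f t)).
by apply: lee_wpmul2r; rewrite // lee_fin invr_ge0 subr_ge0 ltW.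
Qed.

Lemma chord_slope1_le_fslope_inf u : 1 < u ->
  (f u * ((u - 1)^-1)%:E <= fslope_inf f)%E.
Proof.
move=> u1.
(* chord slopes from 1, clamped at u so that Q is nondecreasing on all of R *)
pose Q t := (f (Num.max t u) * ((Num.max t u - 1)^-1)%:E)%E.
have Q_nd : {homo Q : x y / x <= y >-> (x <= y)%E}.
  move=> x y xy; apply: chord_slope1_le; last exact: le_max2.
  by rewrite lt_max u1 orbT.
have Q_cvg : Q t @[t --> +oo] --> ereal_sup (range Q) := nondecreasing_cvge Q_nd.
have QM_def : (ereal_sup (range Q) *? 1%:E)%E.
  case: (boolP (ereal_sup (range Q) \is a fin_num)).
    by move=> /mule_def_fin; apply.
  by move=> /mule_def_infty_neq0; apply.
(* f t / t = Q t * ((t - 1) / t) for t > u, so both have the limit sup Q *)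
have := cvgeM QM_def Q_cvg (@cvge_sub1_div R); rewrite mule1 => QM_cvg.
have -> : fslope_inf f = ereal_sup (range Q).
  apply: cvg_lim => //; apply: cvg_trans; last exact: QM_cvg.
  apply: near_eq_cvg.
  near=> t; have ut : u < t by near: t; exists u; split; [exact: num_real | by []].
  rewrite /Q /= max_l ?ltW // -muleA -EFinM; congr (_ * _%:E)%E.
  by field; rewrite subr_eq0 !gt_eqF // ?(lt_trans _ ut) // (lt_trans ltr01).
by apply: ereal_sup_ubound; exists u => //; rewrite /Q maxxx.
Unshelve. all: by end_near.
Qed.

Lemma le_fslope_inf u : 1 <= u -> (f u <= (u - 1)%:E * fslope_inf f)%E.
Proof.
rewrite le_eqVlt => /predU1P[<-|u1]; first by rewrite f1 subrr mul0e.
have u10 : 0 < u - 1 by rewrite subr_gt0.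
by rewrite muleC -lee_pdivrMr //; exact: chord_slope1_le_fslope_inf.
Qed.

Lemma fslope_inf_neqNy : fslope_inf f != -oo%E.
Proof.
apply: contra (f_neqNy 2) => /eqP L_Ny.
have := @le_fslope_inf 2 (ler1n _ 2).
by rewrite L_Ny gt0_muleNy ?lte_fin ?subr_gt0 ?ltr1n // leeNy_eq.
Qed.

Lemma persp_neqNy a b : 0 <= a -> 0 <= b -> persp f a b != -oo%E.
Proof.
move=> a0; rewrite le_eqVlt => /predU1P[<-|b0].
  by rewrite persp_b0 // ge0_EFinM_neqNy // fslope_inf_neqNy.
by rewrite persp_gt0 // ge0_EFinM_neqNy ?ltW.
Qed.

Lemma add_fslope_inf_ge0 w : 0 <= w <= 1 ->
  (0 <= f w + (1 - w)%:E * fslope_inf f)%E.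
Proof.
move=> /andP[w0 w1]; have half_gt0 : 0 < (2^-1 : R) by rewrite invr_gt0 ltr0n.
have midpoint : (0 <= (2^-1)%:E * f w + (2^-1)%:E * f (2 - w))%E.
  have half01 : 0 <= (2^-1 : R) <= 1 by rewrite ltW //= invf_le1 ?ler1n.
  have := @f_convex w (2 - w) 2^-1 half01; rewrite (_ : 1 - 2^-1 = 2^-1 :> R).
    by rewrite (_ : 2^-1 * w + 2^-1 * (2 - w) = 1) ?f1 //; field.
  by field.
have slope : (f (2 - w) <= (1 - w)%:E * fslope_inf f)%E.
  by have := @le_fslope_inf (2 - w); rewrite (_ : 2 - w - 1 = 1 - w); [apply; lra | ring].
rewrite -(pmule_rge0 _ (_ : 0 < (2^-1)%:E)%E) ?lte_fin // muleDr //; last first.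
  by rewrite neqNy_adde_def ?ge0_EFinM_neqNy ?subr_ge0 ?fslope_inf_neqNy.
apply: le_trans midpoint _; apply: leeD2l.
by apply: lee_wpmul2l; [rewrite lee_fin ltW | exact: slope].
Qed.

Lemma hfun_ge0 z b : 0 <= z <= 1 -> 0 <= b <= 1 -> (0 <= hfun f z b)%E.
Proof.
move=> z01 /andP[b0 b1]; have [z0 z1] := andP z01.
have persp_1 a : persp f a 1 = f a by rewrite persp_gt0 // divr1 mul1e.
have [->|b_gt0] := eqVneq b 0.
  rewrite /hfun subr0 persp_1 persp_b0 // addeC.
  by have := @add_fslope_inf_ge0 (1 - z); rewrite subKr; apply; lra.
have [->|b_lt1] := eqVneq b 1.
  by rewrite /hfun subrr persp_1 persp_b0 ?subr_ge0 //; exact: add_fslope_inf_ge0.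
have b0' : 0 < b by rewrite lt_neqAle eq_sym b_gt0.
have b1' : 0 < 1 - b by rewrite subr_gt0 lt_neqAle b_lt1.
rewrite /hfun !persp_gt0 //.
have := @f_convex (z / b) ((1 - z) / (1 - b)) b.
rewrite (_ : b * (z / b) + (1 - b) * ((1 - z) / (1 - b)) = 1) ?f1.
  by apply; rewrite b0 b1.
by field; rewrite !gt_eqF.
Qed.

Lemma persp_segment_le a b t : 0 <= a -> 0 <= b -> 0 <= t <= 1 ->
  0 < t * a + (1 - t) * b ->
  (persp f a (t * a + (1 - t) * b) <= (1 - t)%:E * persp f a b)%E.
Proof.
move=> a0 b0 /andP[t0 t1]; set m := t * a + (1 - t) * b => m0.
rewrite persp_gt0 //; move: b0; rewrite le_eqVlt => /predU1P[b0|b0].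
  have ta : m = t * a by rewrite /m -b0 mulr0 addr0.
  have t0' : 0 < t.
    rewrite lt_neqAle t0 andbT; apply: contraTneq m0.
    by rewrite ta => <-; rewrite mul0r ltxx.
  have a0' : 0 < a by rewrite -(pmulr_rgt0 _ t0') -ta.
  rewrite -b0 persp_b0 // muleA -EFinM (_ : a / m = t^-1); last first.
    by rewrite ta invfM mulrCA divff ?mulr1 // gt_eqF.
  apply: le_trans (_ : m%:E * ((t^-1 - 1)%:E * fslope_inf f) <= _)%E.
    apply: lee_wpmul2l; first by rewrite lee_fin ltW.
    by apply: le_fslope_inf; rewrite invf_ge1.
  rewrite muleA -EFinM ta (_ : t * a * (t^-1 - 1) = (1 - t) * a) //.
  by field; rewrite gt_eqF.
set lam := t * a / m.
have lam01 : 0 <= lam <= 1.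
  rewrite /lam divr_ge0 ?mulr_ge0 ?(ltW m0) //= ler_pdivrMr // mul1r.
  by rewrite /m lerDl mulr_ge0 ?subr_ge0 ?(ltW b0).
have m_lam : m * (1 - lam) = (1 - t) * b.
  by rewrite /lam /m; field; rewrite -/m gt_eqF.
have := @convex_from_one (a / b) lam lam01.
rewrite (_ : lam * 1 + (1 - lam) * (a / b) = a / m); last first.
  by rewrite /lam /m; field; rewrite -/m !gt_eqF.
move=> /(@lee_wpmul2l _ m%:E); rewrite lee_fin ltW // => /(_ isT) /le_trans; apply.
by rewrite persp_gt0 // muleA -EFinM m_lam EFinM muleA.
Qed.

Lemma hfun_le z m b : 0 <= z -> z < m -> m <= b -> b <= 1 ->
  (hfun f z m <= hfun f z b)%E.
Proof.
move=> z0 zm; rewrite le_eqVlt => /predU1P[<- //|mb] b1.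
set t := (b - m) / (b - z).
have bz : 0 < b - z by rewrite subr_gt0 (lt_trans zm).
have t01 : 0 <= t <= 1.
  rewrite /t divr_ge0 ?(ltW bz) ?subr_ge0 ?(ltW mb) //= ler_pdivrMr // mul1r.
  by rewrite lerD2l lerN2 ltW.
have m_eq : m = t * z + (1 - t) * b by rewrite /t; field; rewrite gt_eqF.
have m_eq' : 1 - m = t * (1 - z) + (1 - t) * (1 - b) by rewrite m_eq; ring.
have [z1 b0] : z <= 1 /\ 0 <= b by split; lra.
have P1 := @persp_segment_le z b t z0 b0 t01.
have P2 := @persp_segment_le (1 - z) (1 - b) t.
rewrite -m_eq -m_eq' !subr_ge0 subr_gt0 in P1 P2.
rewrite /hfun.
have := leeD (P1 (le_lt_trans z0 zm)) (P2 z1 b1 t01 (lt_le_trans mb b1)).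
move/le_trans; apply.
rewrite -muleDr ?fin_numE //; last first.
  by rewrite neqNy_adde_def ?persp_neqNy ?subr_ge0.
apply: gee_pMl; first by rewrite fin_numE.
- by apply: hfun_ge0; rewrite ?z0 ?b0.
- by rewrite lee_fin lerBlDr lerDl; case/andP: t01.
Qed.
End Perspective.

Section ConvexCombination.
Variables (R : numDomainType) (d : nat) (beta lam : 'I_d -> R).
Hypotheses (lam_ge0 : forall i, 0 <= lam i) (lam_sum1 : \sum_(i < d) lam i = 1).

Lemma convex_comb_ge c :
  (forall i, c <= beta i) -> c <= \sum_(i < d) lam i * beta i.
Proof.
move=> c_le; rewrite -[c]mul1r -lam_sum1 big_distrl /=.
by apply: ler_sum => i _; exact: ler_wpM2l.
Qed.

Lemma convex_comb_le c :
  (forall i, beta i <= c) -> \sum_(i < d) lam i * beta i <= c.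
Proof.
move=> le_c; rewrite -[c]mul1r -lam_sum1 big_distrl /=.
by apply: ler_sum => i _; exact: ler_wpM2l.
Qed.

End ConvexCombination.

Lemma bigmin_convex_comb (R : realDomainType) d (beta : 'I_d -> R) :
  (0 < d)%N -> (forall i, beta i <= 1) ->
  exists2 lam : 'I_d -> R, (forall i, 0 <= lam i) /\ \sum_(i < d) lam i = 1 &
    \sum_(i < d) lam i * beta i = \big[Num.min/1]_(i < d) beta i.
Proof.
move=> d0 beta_le1.
have [i0 _ ->] : {i0 | i0 \in predT & \big[Num.min/1]_(i < d) beta i = beta i0}.
  by apply: (eq_bigmin (Ordinal d0)) => // i _.
exists (fun i => (i == i0)%:R).
  split=> [i|]; first exact: ler0n.
  by rewrite (bigD1 i0) //= eqxx big1 ?addr0 // => i /negbTE ->.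
by rewrite (bigD1 i0) //= eqxx mul1r big1 ?addr0 // => i /negbTE ->; rewrite mul0r.
Qed.

Theorem lemma17 (R : realType) (f : R -> \bar R) (rho : R)
  (hf : fdiv_gen f) (hrho : 0 < rho)
  (d : nat) (hd : (0 < d)%N) (beta : 'I_d -> R)
  (hbeta : forall i, 0 <= beta i <= 1) :
  gd f rho beta = g1 f rho (\big[Num.min/1]_(i < d) beta i).
Proof.
case: hf => f_neqNy f_convex _ f1 _.
have beta_ge0 i : 0 <= beta i by case/andP: (hbeta i).
have beta_le1 i : beta i <= 1 by case/andP: (hbeta i).
have [lam0 [lam0_ge0 lam0_sum1] lam0_m] := bigmin_convex_comb hd beta_le1.
set m := \big[Num.min/1]_(i < d) beta i in lam0_m *.
have m01 : 0 <= m <= 1 by rewrite -lam0_m convex_comb_ge ?convex_comb_le.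
apply/le_anti/andP; split.
- apply: ereal_inf_le_tmp => _ [z [z01 hz] <-]; exists z => //; split => //.
  by apply: le_trans hz; apply: ereal_inf_lbound; exists lam0; rewrite ?lam0_m.
- apply: le_ereal_inf_tmp => _ [z [z01 hz] <-].
  have [mz | zm] := leP m z.
    apply: (@le_trans _ _ m%:E); last by rewrite lee_fin.
    apply: ereal_inf_lbound; exists m => //; split => //.
    by rewrite hfun_diag // lee_fin ltW.
  apply: ereal_inf_lbound; exists z => //; split => //.
  apply: le_trans hz; apply: le_ereal_inf_tmp => _ [lam [lam_ge0 lam_sum1] <-].
  apply: hfun_le => //; first by case/andP: z01.
  - by apply: convex_comb_ge => // i; exact: bigmin_le.
  - exact: convex_comb_le.
Qed.
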